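(* Let $(M,\mu)$ be a finite measure space, $\beta>1$, $f:M\to\mathbb R$ measurable and $E\subseteq M$ measurable with $0<\mu(E)<\mu(M)$. Define $$\tilde f(y)=\begin{cases}\operatorname{ess\,sup}_{z\in M\setminus E}|f(z)|, & y\in E,\\ f(y), & y\in M\setminus E.\end{cases}$$ Then $\tilde f^*(t)\ge f^*(t)$ for $\mu(E)\le t\le\mu(M)$, and $$\int_{M\setminus E}|\tilde f|^\beta\,d\mu=\int_{\mu(E)}^{\mu(M)}[\tilde f^*(t)]^\beta\,dt.$$
   Context: For measurable $f$ on $(M,\mu)$: $m(f,s)=\mu(\{|f|>s\})$ and $f^*(t)=\inf\{s\ge0:m(f,s)\le t\}$ is the nonincreasing rearrangement. *)

From HB Require Import structures.
From mathcomp Require Import all_boot all_order all_algebra.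
From mathcomp Require Import all_classical all_reals all_analysis.
From mathcomp Require Import ess_sup_inf.
Set Implicit Arguments. Unset Strict Implicit. Unset Printing Implicit Defensive.
Import Order.TTheory GRing.Theory Num.Theory.
Import numFieldNormedType.Exports.
Local Open Scope classical_set_scope.
Local Open Scope ring_scope.
Local Open Scope ereal_scope.

Definition distf d (T : measurableType d) (R : realType)
  (mu : {measure set T -> \bar R}) (g : T -> \bar R) (s : R) : \bar R :=
  mu [set x | s%:E < `|g x|].

(* nonincreasing rearrangement g^*(t) = inf {s >= 0 : m(g,s) <= t}
   (inf of the empty set is +oo) *)
Definition rearr d (T : measurableType d) (R : realType)
  (mu : {measure set T -> \bar R}) (g : T -> \bar R) (t : R) : \bar R :=
  ereal_inf [set s%:E | s in [set s : R | (0 <= s)%R /\ distf mu g s <= t%:E]].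

Definition ftilde d (T : measurableType d) (R : realType)
  (mu : {measure set T -> \bar R}) (f : T -> R) (E : set T)
  (mE : measurable E) : T -> \bar R :=
  fun y => if `[< E y >] then ess_sup (mrestr mu (measurableC mE)) (fun z => (`|f z|)%:E)
           else (f y)%:E.

From HB Require Import structures.
From mathcomp Require Import all_boot all_order all_algebra.
From mathcomp Require Import all_classical all_reals all_analysis.
From mathcomp Require Import ess_sup_inf measurable_realfun lra.
Set Implicit Arguments. Unset Strict Implicit. Unset Printing Implicit Defensive.
Import Order.TTheory GRing.Theory Num.Theory.
Import numFieldNormedType.Exports.
Local Open Scope classical_set_scope.
Local Open Scope ring_scope.
Local Open Scope ereal_scope.

(* Write S for the essential supremum of |f| on M \ E.  Off E the function f~
   is f, and |f| <= S almost everywhere there, so the distribution function of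
   f~ is m(f~, s) = mu(E) [s < |S|] + mu({|f| > s} \ E).  For s with
   m(f~, s) <= t, where t >= mu(E), this already bounds m(f, s), whence
   f~^*(t) >= f^*(t).  Since f^*(t) > s iff t < m(f, s), the same formula shows
   that for s >= 0 the set {t in [mu(E), mu(M)] | f~^*(t) > s} is an interval of
   length mu({|f| > s} \ E): |f~| on M \ E and f~^* on [mu(E), mu(M)] are
   equimeasurable, and so their beta-th powers have the same integral. *)

Section rearrangement.
Context d (T : measurableType d) (R : realType) (mu : {measure set T -> \bar R}).
Variable g : T -> \bar R.
Hypothesis mg : forall s : R, measurable [set x | s%:E < `|g x|].

Lemma le_distf (s1 s2 : R) : (s1 <= s2)%R -> distf mu g s2 <= distf mu g s1.
Proof.
move=> s12; apply: le_measure; rewrite ?inE //.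
by move=> x /=; apply: le_lt_trans; rewrite lee_fin.
Qed.

Lemma distf_right_continuous_lt (s t : R) : t%:E < distf mu g s ->
  exists n : nat, t%:E < distf mu g (s + n.+1%:R^-1).
Proof.
pose F n := [set x | (s + n.+1%:R^-1)%:E < `|g x|].
have UF : \bigcup_n F n = [set x | s%:E < `|g x|].
  apply/seteqP; split=> x /=.
    by move=> [n _ /=]; apply: le_lt_trans; rewrite lee_fin lerDl.
  case gx : `|g x| => [y| |] //=.
    by move=> /ltr_add_invr[n]; exists n => //; rewrite /F /= gx lte_fin.
  by exists 0%N => //; rewrite /F /= gx ltry.
have ndF : nondecreasing_seq F.
  move=> n m nm; apply/subsetPset => x /=; apply: le_lt_trans.
  by rewrite lee_fin lerD2l lef_pV2 ?posrE // ler_nat ltnS.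
have nd : nondecreasing_seq (mu \o F).
  by move=> n m nm; apply: le_measure; rewrite ?inE; [exact: mg..| exact/subsetPset/ndF].
have := @nondecreasing_cvg_mu _ _ _ mu _ (fun n => mg _)
  (bigcup_measurable (fun n _ => mg _)) ndF.
move/(cvg_unique (@ereal_hausdorff R) (ereal_nondecreasing_cvgn nd)); rewrite UF.
by rewrite /distf => <- /ereal_sup_gt[_ [n _ <-] tFn]; exists n.
Qed.

Lemma rearr_ge0 t : 0 <= rearr mu g t.
Proof. by apply/ereal_infP => _ [s [s0 _] <-]; rewrite lee_fin. Qed.

Lemma rearr_gt (r t : R) : (0 <= r)%R ->
  (r%:E < rearr mu g t) = (t%:E < distf mu g r).
Proof.
move=> r0; apply/idP/idP => [|/distf_right_continuous_lt[n tn]].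
  apply: contraTT; rewrite -!leNgt => rt.
  by apply: ereal_inf_lbound; exists r.
apply: (@lt_le_trans _ _ (r + n.+1%:R^-1)%:E); first by rewrite lte_fin ltrDl.
apply/ereal_infP => _ [s [s0 st] <-]; rewrite lee_fin leNgt; apply/negP => sr.
by have := lt_le_trans tn (le_trans (le_distf (ltW sr)) st); rewrite ltxx.
Qed.

Lemma measurable_rearr : measurable_fun setT (rearr mu g).
Proof.
apply: (measurability _ (ErealGenOInfty.measurableE R)) => //.
move=> _ [_ [r ->] <-]; rewrite setTI.
have [r0|r0] := ltP r 0%R.
  rewrite (_ : _ @^-1` _ = setT) //; apply/seteqP; split => // t _ /=.
  by rewrite in_itv /= andbT (lt_le_trans _ (rearr_ge0 t)) ?lte_fin.
rewrite (_ : _ @^-1` _ = [set t | t%:E < distf mu g r]).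
  by rewrite -[X in measurable X]setTI; apply: measurable_lte.
by apply/seteqP; split => t /=; rewrite in_itv /= andbT rearr_gt.
Qed.

End rearrangement.

Section ereal_measure_unique.
Context (R : realType).

Let rays : set (set \bar R) :=
  [set B | B = setT \/ exists r : R, B = `]r%:E, +oo[%classic].

Let measurable_rays : @measurable _ (\bar R) = <<s rays >>.
Proof.
apply/seteqP; split.
  rewrite [X in X `<=` _](ErealGenOInfty.measurableE R).
  apply: smallest_sub; first exact: smallest_sigma_algebra.
  by move=> B [r ->]; apply: sub_sigma_algebra; right; exists r.
apply: smallest_sub; first exact: sigma_algebra_measurable.
by move=> B [->|[r ->]]; [exact: measurableT | exact: emeasurable_itv].
Qed.

Let setI_closed_rays : setI_closed rays.
Proof.
move=> B C [->|[r1 ->]] [->|[r2 ->]].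
- by left; rewrite setTI.
- by right; exists r2; rewrite setTI.
- by right; exists r1; rewrite setIT.
- right; exists (Num.max r1 r2); apply/seteqP.
  by split=> x /=; rewrite !in_itv /= !andbT EFin_max gt_max => /andP.
Qed.

Lemma ereal_measure_unique_trace (m1 m2 : {measure set \bar R -> \bar R})
    (D : set \bar R) : measurable D -> m1 D < +oo -> m1 D = m2 D ->
  (forall r : R, m1 (`]r%:E, +oo[%classic `&` D) = m2 (`]r%:E, +oo[%classic `&` D)) ->
  forall B, measurable B -> B `<=` D -> m1 B = m2 B.
Proof.
move=> mD m1D_fin m12D m12rays B mB BD; rewrite -(setIidl BD).
apply: (measure_unique rays (fun=> setT) measurable_rays setI_closed_rays
  _ _ (mrestr m1 mD) (mrestr m2 mD)) => //.
- by move=> _; left.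
- by rewrite bigcup_const.
- by move=> C [->|[r ->]]; rewrite /= /mrestr ?setTI.
- by move=> _; rewrite /= /mrestr setTI.
Qed.

End ereal_measure_unique.

Section patch_ninfty.
Context d (T : measurableType d) (R : realType) (A : set T) (g : T -> \bar R).
Local Notation gA := (patch (fun=> -oo) A g).

Lemma preimage_patch_ninfty_gt (r : R) :
  gA @^-1` `]r%:E, +oo[%classic = A `&` g @^-1` `]r%:E, +oo[%classic.
Proof.
apply/seteqP; split=> x; rewrite /preimage /patch /= !in_itv /= !andbT;
  by case: ifPn; rewrite ?inE ?notin_setE => Ax // -[] // /Ax.
Qed.

Lemma measurable_patch_ninfty : measurable A -> measurable_fun A g ->
  measurable_fun setT gA.
Proof.
move=> mA mg; apply: (measurability _ (ErealGenOInfty.measurableE R)) => //.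
move=> _ [_ [r ->] <-]; rewrite setTI preimage_patch_ninfty_gt.
exact/mg/emeasurable_itv.
Qed.

Hypothesis g_ge0 : forall x, A x -> 0 <= g x.

Lemma preimage_patch_ninfty_ge0 : gA @^-1` `[0, +oo[%classic = A.
Proof.
apply/seteqP; split=> x; rewrite /preimage /patch /= in_itv /= andbT.
  by case: ifPn; rewrite ?inE.
by move=> Ax; rewrite ifT ?inE //; exact: g_ge0.
Qed.

Lemma preimage_patch_ninfty_level (r : R) :
  gA @^-1` (`]r%:E, +oo[%classic `&` `[0, +oo[%classic) = A `&` [set x | r%:E < g x].
Proof.
rewrite preimage_setI preimage_patch_ninfty_ge0 preimage_patch_ninfty_gt.
rewrite setIAC setIid.
by apply/seteqP; split=> x [Ax]; rewrite /= in_itv /= andbT.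
Qed.

Lemma ge0_integral_patch_ninfty (mu : {measure set T -> \bar R})
    (h : \bar R -> \bar R) (mgA : measurable_fun setT gA) :
  measurable_fun `[0, +oo[%classic h -> (forall y, 0 <= y -> 0 <= h y) ->
  \int[mu]_(x in A) h (g x) = \int[pushforward mu gA]_(y in `[0, +oo[%classic) h y.
Proof.
move=> mh h_ge0; rewrite (ge0_integral_pushforward mgA) ?preimage_patch_ninfty_ge0 //.
- by apply: eq_integral => x /[1!inE] Ax; rewrite /= /patch ifT ?inE.
- exact: emeasurable_itv.
- by move=> y; rewrite inE /= in_itv /= andbT; exact: h_ge0.
Qed.

End patch_ninfty.

Section equimeasurable.
Context d1 d2 (T1 : measurableType d1) (T2 : measurableType d2) (R : realType).
Variables (mu1 : {measure set T1 -> \bar R}) (mu2 : {measure set T2 -> \bar R}).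

(* Extending g_i by -oo off A_i reduces the claim to the equality of the image
   measures on [0, +oo], which are determined by their values on the rays. *)
Lemma ge0_integral_equimeasurable (A1 : set T1) (A2 : set T2)
    (g1 : T1 -> \bar R) (g2 : T2 -> \bar R) (h : \bar R -> \bar R) :
  measurable A1 -> measurable A2 -> measurable_fun A1 g1 -> measurable_fun A2 g2 ->
  (forall x, A1 x -> 0 <= g1 x) -> (forall x, A2 x -> 0 <= g2 x) ->
  measurable_fun `[0, +oo[%classic h -> (forall y, 0 <= y -> 0 <= h y) ->
  mu1 A1 < +oo -> mu1 A1 = mu2 A2 ->
  (forall r : R, (0 <= r)%R ->
     mu1 (A1 `&` [set x | r%:E < g1 x]) = mu2 (A2 `&` [set x | r%:E < g2 x])) ->
  \int[mu1]_(x in A1) h (g1 x) = \int[mu2]_(x in A2) h (g2 x).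
Proof.
move=> mA1 mA2 mg1 mg2 g1_ge0 g2_ge0 mh h_ge0 mu1A1_fin mu12A mu12_level.
have mp1 := measurable_patch_ninfty mA1 mg1.
have mp2 := measurable_patch_ninfty mA2 mg2.
rewrite (ge0_integral_patch_ninfty g1_ge0 mu1 mp1) //.
rewrite (ge0_integral_patch_ninfty g2_ge0 mu2 mp2) //.
unshelve epose (P1 := pushforward mu1 (patch (fun=> -oo) A1 g1)
                   : {measure set \bar R -> \bar R}); first exact: mp1.
unshelve epose (P2 := pushforward mu2 (patch (fun=> -oo) A2 g2)
                   : {measure set \bar R -> \bar R}); first exact: mp2.
apply: (eq_measure_integral P2 (m1 := P1)); apply: ereal_measure_unique_trace.
- exact: emeasurable_itv.
- by rewrite /P1 /= /pushforward preimage_patch_ninfty_ge0.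
- by rewrite /P1 /P2 /= /pushforward !preimage_patch_ninfty_ge0.
move=> r; rewrite /P1 /P2 /= /pushforward !preimage_patch_ninfty_level //.
have [r0|r0] := ltP r 0%R; last exact: mu12_level.
have level_neg d (T : measurableType d) (A : set T) (g : T -> \bar R) :
    (forall x, A x -> 0 <= g x) -> A `&` [set x | r%:E < g x] = A.
  by move=> g_ge0; apply/setIidl => x /g_ge0; apply: lt_le_trans; rewrite lte_fin.
by rewrite !level_neg.
Qed.

End equimeasurable.

Section ftilde.
Context d (T : measurableType d) (R : realType) (mu : {finite_measure set T -> \bar R}).
Variables (f : T -> R) (E : set T) (mE : measurable E).
Hypothesis mf : measurable_fun setT f.

Local Notation S := (ess_sup (mrestr mu (measurableC mE)) (fun z => (`|f z|)%:E)).
Local Notation level r := (~` E `&` [set x | r%:E < `|(f x)%:E|]).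

Let measurable_abs_gt (r : R) : measurable [set x | r%:E < `|(f x)%:E|].
Proof.
rewrite -[X in measurable X]setTI; apply: measurable_lte => //.
exact/measurableT_comp/measurableT_comp.
Qed.

Let measurable_level (r : R) : measurable (level r).
Proof. exact/measurableI/measurable_abs_gt/measurableC. Qed.

Lemma level_ess_sup_null (r : R) : S <= r%:E -> mu (level r) = 0.
Proof.
move=> Sr; have [N [mN N0 leS]] :=
  ess_sup_ge (mrestr mu (measurableC mE)) (fun z => (`|f z|)%:E).
apply/eqP; rewrite eq_le measure_ge0 andbT -N0 /mrestr.
apply: le_measure; rewrite ?inE; first exact: measurable_level.
  exact: measurableI mN (measurableC mE).
move=> x [Ex rfx]; split => //; apply: leS => /= fxS.
by have := lt_le_trans rfx (le_trans fxS Sr); rewrite ltxx.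
Qed.

Lemma ftilde_level (r : R) : [set x | r%:E < `|ftilde mu f mE x|] =
  (if r%:E < `|S| then E else set0) `|` level r.
Proof.
apply/seteqP; split=> x; rewrite /ftilde /=; case: (asboolP (E x)) => Ex.
- by move=> ->; left.
- by move=> ?; right.
- by case: ifPn => _ [|[]].
- by case: ifPn => _ [|[]].
Qed.

Lemma measurable_ftilde_gt (s : R) : measurable [set x | s%:E < `|ftilde mu f mE x|].
Proof.
rewrite ftilde_level; apply: measurableU (measurable_level s).
by case: ifPn.
Qed.

Lemma distf_ftilde (r : R) : distf mu (ftilde mu f mE) r =
  (if r%:E < `|S| then mu E else 0) + mu (level r).
Proof.
rewrite /distf ftilde_level; case: ifPn => _.
  by rewrite measureU // setIA setICr set0I.
by rewrite set0U add0e.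
Qed.

Lemma distf_le_add_level (r : R) : distf mu (fun x => (f x)%:E) r <= mu E + mu (level r).
Proof.
apply: le_trans (measureU2 mu mE (measurable_level r)).
apply: le_measure; rewrite ?inE; [exact: measurable_abs_gt | exact: measurableU | ].
by move=> x fx; case: (asboolP (E x)) => Ex; [left | right].
Qed.

Lemma rearr_le_rearr_ftilde (t : R) : mu E <= t%:E ->
  rearr mu (fun x => (f x)%:E) t <= rearr mu (ftilde mu f mE) t.
Proof.
move=> Et; apply: le_ereal_inf => _ [s [s0 st] <-]; exists s => //; split => //.
apply: le_trans (distf_le_add_level s) _; move: st; rewrite distf_ftilde.
case: ifPn => //; rewrite -leNgt => /(le_trans (lee_abs _)) /level_ess_sup_null ->.
by rewrite !addr0 => _.
Qed.

Let fin_measure (A : set T) : measurable A -> mu A = (fine (mu A))%:E.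
Proof. by move=> mA; rewrite fineK // fin_num_measure. Qed.

Lemma lebesgue_level_rearr_ftilde (r : R) : (0 <= r)%R ->
  lebesgue_measure (`[fine (mu E), fine (mu setT)]%classic `&`
                    [set t | r%:E < rearr mu (ftilde mu f mE) t]) = mu (level r).
Proof.
move=> r0; set a := fine (mu E); set n := fine (mu (level r)).
have a0 : (0 <= a)%R by apply: fine_ge0; exact: measure_ge0.
have n0 : (0 <= n)%R by apply: fine_ge0; exact: measure_ge0.
have anb : (a + n <= fine (mu setT))%R.
  rewrite -lee_fin EFinD -(fin_measure mE) -(fin_measure (measurable_level r)).
  rewrite -(fin_measure measurableT) -measureU //.
    by apply: le_measure; rewrite ?inE //; exact: measurableU.
  by rewrite setIA setICr set0I.
rewrite (_ : [set t | r%:E < rearr mu (ftilde mu f mE) t] =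
    [set t | t%:E < distf mu (ftilde mu f mE) r]); last first.
  by apply/seteqP; split=> t; rewrite /= (rearr_gt mu measurable_ftilde_gt).
rewrite distf_ftilde; case: ifPn => [_ | ].
  rewrite (fin_measure mE) (fin_measure (measurable_level r)) -/a -/n -EFinD.
  rewrite (_ : _ `&` _ = `[a, (a + n)%R[%classic); last first.
    apply/seteqP; split=> t; rewrite /= !in_itv /= lte_fin.
      by move=> [/andP[-> _]].
    by move=> /andP[ta tan]; rewrite ta tan (le_trans (ltW tan) anb).
  rewrite lebesgue_measure_itv /= lte_fin -EFinD; case: ifPn => h; congr EFin; lra.
rewrite -leNgt => /(le_trans (lee_abs _)) /level_ess_sup_null ->; rewrite adde0.
rewrite (_ : _ `&` _ = set0) ?measure0 //; apply/seteqP; split=> t //=.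
by rewrite in_itv /= lte_fin => -[/andP[ta _] t0]; lra.
Qed.

Lemma measure_compl_itv :
  mu (~` E) = lebesgue_measure `[fine (mu E), fine (mu setT)]%classic.
Proof.
have ab : (fine (mu E) <= fine (mu setT))%R.
  by rewrite -lee_fin -!fin_measure //; apply: le_measure; rewrite ?inE.
rewrite -setTD measureD ?ltey_eq ?fin_num_measure // setTI lebesgue_measure_itv /=.
rewrite lte_fin; case: ltP => [_|ba]; first by rewrite EFinN !fineK ?fin_num_measure.
have -> : mu setT = mu E.
  rewrite -[LHS]fineK ?fin_num_measure // -[RHS]fineK ?fin_num_measure //.
  by rewrite (@le_anti _ _ (fine (mu setT)) (fine (mu E))) ?ab ?ba.
by rewrite subee ?fin_num_measure.
Qed.

Lemma integral_ftilde_rearr (beta : R) :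
  \int[mu]_(x in ~` E) (`|ftilde mu f mE x| `^ beta) =
  \int[lebesgue_measure]_(t in `[fine (mu E), fine (mu setT)])
     ((rearr mu (ftilde mu f mE) t) `^ beta).
Proof.
have ftildeC x : ~ E x -> ftilde mu f mE x = (f x)%:E.
  by move=> Ex; rewrite /ftilde; case: asboolP.
apply: (ge0_integral_equimeasurable (h := fun y => y `^ beta)).
- exact: measurableC.
- exact: measurable_itv.
- apply: (@eq_measurable_fun _ _ _ _ _ (fun x => `|(f x)%:E|)).
    by move=> x /[1!inE] /ftildeC ->.
  apply: (measurable_funS measurableT) => //.
  exact/measurableT_comp/measurableT_comp.
- exact: (measurable_funS measurableT) (measurable_rearr mu measurable_ftilde_gt).
- by move=> x _; exact: abse_ge0.
- by move=> t _; exact: rearr_ge0.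
- exact: (measurable_funS measurableT) (measurable_poweR _).
- by move=> y _; exact: poweR_ge0.
- by rewrite ltey_eq fin_num_measure //; exact: measurableC.
- exact: measure_compl_itv.
- move=> r r0; apply: eq_trans (esym (lebesgue_level_rearr_ftilde r0)).
  by congr (mu _); apply/seteqP; split=> x [Ex]; rewrite /= ftildeC.
Qed.

End ftilde.

Theorem lemma5 (d : measure_display) (T : measurableType d) (R : realType)
  (mu : {finite_measure set T -> \bar R}) (beta : R) (f : T -> R) (E : set T)
  (mE : measurable E) :
  (1 < beta)%R -> measurable_fun setT f -> 0 < mu E -> mu E < mu setT ->
  (forall t : R, mu E <= t%:E -> t%:E <= mu setT ->
     rearr mu (fun x => (f x)%:E) t <= rearr mu (ftilde mu f mE) t) /\
  \int[mu]_(x in ~` E) (`|ftilde mu f mE x| `^ beta) =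
  \int[lebesgue_measure]_(t in `[fine (mu E), fine (mu setT)])
     ((rearr mu (ftilde mu f mE) t) `^ beta).
Proof.
move=> _ mf _ _; split=> [t Et _|].
  exact: rearr_le_rearr_ftilde.
exact: integral_ftilde_rearr.
Qed.
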